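(* Let $G_1$ and $G_2$ be two vertex-disjoint simple connected graphs with $|V(G_1)|=n_1$, $|V(G_2)|=n_2$, $|E(G_1)|=m_1$, $|E(G_2)|=m_2$. Then the edge S-join $G_1\underline{\vee}_S G_2$ satisfies \[ F(G_1\underline{\vee}_S G_2)=F(G_1)+F(G_2)+3m_1M_1(G_2)+6m_1^{2}m_2+m_1(n_2+2)^3+n_2m_1^{3}. \]
   Context: For a simple graph $G$ and $v\in V(G)$, $d_G(v)$ is the degree of $v$. The first Zagreb index is $M_1(G)=\sum_{v\in V(G)}d_G(v)^2$ and the F-index is $F(G)=\sum_{v\in V(G)}d_G(v)^3$. The subdivision graph $S(G)$ is obtained from $G$ by inserting a new vertex into each edge of $G$ (replacing each edge by a path of length 2); let $I(G)$ denote the set of these inserted vertices, so $V(S(G))=V(G)\cup I(G)$. The edge S-join $G_1\underline{\vee}_S G_2$ is the graph obtained from $S(G_1)$ and $G_2$ (taken vertex-disjoint) by joining each vertex of $I(G_1)$ to every vertex of $G_2$ by an edge. *)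

From mathcomp Require Import all_boot.
Set Implicit Arguments. Unset Strict Implicit. Unset Printing Implicit Defensive.

Definition simple_graph (T : finType) (e : rel T) : Prop :=
  symmetric e /\ irreflexive e.

Definition connected_graph (T : finType) (e : rel T) : Prop :=
  forall x y : T, connect e x y.

Definition edge_set (T : finType) (e : rel T) : {set {set T}} :=
  [set A : {set T} | [exists x : T, exists y : T, e x y && (A == [set x; y])]].

Definition deg (T : finType) (e : rel T) (v : T) : nat := #|[set w | e v w]|.

Definition M1 (T : finType) (e : rel T) : nat := \sum_(v : T) deg e v ^ 2.
Definition Findex (T : finType) (e : rel T) : nat := \sum_(v : T) deg e v ^ 3.

(* Inserted (subdivision) vertices of S(G1): one per edge of G1. *)
Definition ins_vert (T1 : finType) (e1 : rel T1) : finType :=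
  {A : {set T1} | A \in edge_set e1}.

Definition sjoin_vert (T1 T2 : finType) (e1 : rel T1) : finType :=
  (T1 + (ins_vert e1 + T2))%type.

(* Adjacency in the edge S-join G1 _v_S G2: edges of S(G1) (u -- inserted
   vertex of an edge containing u), edges of G2, and every inserted vertex
   joined to every vertex of G2. *)
Definition sjoin_rel (T1 T2 : finType) (e1 : rel T1) (e2 : rel T2) :
    rel (sjoin_vert T2 e1) :=
  fun a b =>
    match a, b with
    | inl u, inr (inl A) => u \in val A
    | inr (inl A), inl u => u \in val A
    | inr (inl _), inr (inr _) => true
    | inr (inr _), inr (inl _) => true
    | inr (inr v), inr (inr w) => e2 v w
    | _, _ => false
    end.

Arguments sjoin_vert {T1} T2 e1.
Arguments sjoin_rel {T1 T2} e1 e2 _ _.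

(* In the edge S-join every vertex of G1 keeps its degree, every
   inserted vertex is adjacent to the two ends of its edge and to all of G2,
   so has degree n2 + 2, and every vertex of G2 gains the m1 inserted vertices.
   Summing cubes, expanding (d + m1)^3 and using the handshake lemma
   \sum_v d(v) = 2 m2 gives the formula. *)
From mathcomp Require Import all_boot.
From mathcomp Require Import ring.

Set Implicit Arguments.
Unset Strict Implicit.
Unset Printing Implicit Defensive.

Lemma deg_sum1 (T : finType) (e : rel T) (v : T) : deg e v = \sum_(w | e v w) 1.
Proof. by rewrite /deg sum1dep_card. Qed.

Lemma card_edge_set (T : finType) (e : rel T) (A : {set T}) :
  irreflexive e -> A \in edge_set e -> #|A| = 2.
Proof.
move=> irr; rewrite inE => /existsP [x /existsP [y /andP [exy /eqP ->]]].
by rewrite cards2; case: eqVneq exy => [->|//]; rewrite irr.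
Qed.

Lemma deg_edge_set (T : finType) (e : rel T) (v : T) : simple_graph e ->
  deg e v = #|[set A in edge_set e | v \in A]|.
Proof.
move=> [sym irr].
have -> : [set A in edge_set e | v \in A] = (fun w => [set v; w]) @: [set w | e v w].
  apply/setP => A; rewrite !inE; apply/andP/imsetP.
  - move=> [/existsP [x /existsP [y /andP [exy /eqP ->]]]].
    rewrite !inE => /orP [/eqP ->|/eqP ->]; first by exists y; rewrite ?inE.
    by exists x; rewrite ?inE 1?sym // setUC.
  - move=> [w]; rewrite inE => evw ->; split; last by rewrite !inE eqxx.
    by apply/existsP; exists v; apply/existsP; exists w; rewrite evw eqxx.
rewrite card_in_imset // => w w'; rewrite !inE => evw _ Eww'.
have : w \in [set v; w'] by rewrite -Eww' !inE eqxx orbT.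
by rewrite !inE => /orP [/eqP wv|/eqP //]; rewrite wv irr in evw.
Qed.

Lemma sum_deg (T : finType) (e : rel T) : simple_graph e ->
  \sum_v deg e v = 2 * #|edge_set e|.
Proof.
move=> sg.
transitivity (\sum_v \sum_(A in edge_set e) (v \in A : nat)).
  apply: eq_bigr => v _; rewrite deg_edge_set // -sum1_card big_mkcond [RHS]big_mkcond.
  by apply: eq_bigr => A _; rewrite inE; case: (A \in edge_set e); case: (v \in A).
rewrite exchange_big -sum1_card big_distrr /=.
apply: eq_bigr => A eA; rewrite muln1 -(card_edge_set sg.2 eA) -sum1_card [RHS]big_mkcond.
by apply: eq_bigr => v _; case: (v \in A).
Qed.

Lemma sum_cube_addr (I : finType) (f : I -> nat) (c : nat) :
  \sum_i (f i + c) ^ 3 =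
  \sum_i f i ^ 3 + 3 * c * \sum_i f i ^ 2 + 3 * c ^ 2 * \sum_i f i + #|I| * c ^ 3.
Proof.
rewrite !big_distrr -sum_nat_const -!big_split /=.
by apply: eq_bigr => i _; ring.
Qed.

Section EdgeSJoin.

Variables (T1 T2 : finType) (e1 : rel T1) (e2 : rel T2).
Hypothesis simple_e1 : simple_graph e1.

Let m1 := #|edge_set e1|.
Let e := sjoin_rel e1 e2.

Lemma card_ins_vert : #|ins_vert e1| = m1.
Proof. by rewrite card_sig; apply: eq_card. Qed.

Lemma deg_sjoin_G1 (u : T1) : deg e (inl u) = deg e1 u.
Proof.
rewrite deg_sum1 big_sumType /= big_pred0_eq add0n big_sumType /= big_pred0_eq addn0.
rewrite deg_edge_set // sum1dep_card -(card_imset _ val_inj).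
apply: eq_card => A; apply/imsetP/idP.
- move=> [B]; rewrite !inE => uB ->; rewrite uB andbT.
  by have := valP B; rewrite inE.
- rewrite !inE => /andP [eA uA]; have eA' : A \in edge_set e1 by rewrite inE.
  by exists (exist _ A eA'); rewrite ?inE.
Qed.

Lemma deg_sjoin_ins (A : ins_vert e1) : deg e (inr (inl A)) = #|T2| + 2.
Proof.
rewrite deg_sum1 big_sumType /= big_sumType /= big_pred0_eq sum1dep_card sum1_card.
have -> : [set x | x \in val A] = val A by apply/setP => x; rewrite inE.
by rewrite (card_edge_set simple_e1.2 (valP A)) addnC.
Qed.

Lemma deg_sjoin_G2 (v : T2) : deg e (inr (inr v)) = deg e2 v + m1.
Proof.
rewrite deg_sum1 big_sumType /= big_pred0_eq add0n big_sumType /= sum1_card.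
by rewrite card_ins_vert -deg_sum1 addnC.
Qed.

Lemma Findex_sjoin :
  Findex e = Findex e1 + m1 * (#|T2| + 2) ^ 3 + \sum_v (deg e2 v + m1) ^ 3.
Proof.
rewrite /Findex big_sumType /= big_sumType /= addnA.
congr (_ + _ + _).
- by apply: eq_bigr => u _; rewrite deg_sjoin_G1.
- rewrite (eq_bigr (fun _ => (#|T2| + 2) ^ 3)) => [|A _]; last by rewrite deg_sjoin_ins.
  by rewrite sum_nat_const card_ins_vert.
- by apply: eq_bigr => v _; rewrite deg_sjoin_G2.
Qed.

End EdgeSJoin.

Theorem theorem2 (T1 T2 : finType) (e1 : rel T1) (e2 : rel T2) :
  simple_graph e1 -> simple_graph e2 ->
  connected_graph e1 -> connected_graph e2 ->
  let n2 := #|T2| in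
  let m1 := #|edge_set e1| in
  let m2 := #|edge_set e2| in
  Findex (sjoin_rel e1 e2) =
    Findex e1 + Findex e2 + 3 * m1 * M1 e2 + 6 * m1 ^ 2 * m2
    + m1 * (n2 + 2) ^ 3 + n2 * m1 ^ 3.
Proof.
move=> simple_e1 simple_e2 _ _ n2 m1 m2.
rewrite Findex_sjoin // sum_cube_addr sum_deg // /M1 /Findex.
ring.
Qed.
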